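(* For $A\in C^\alpha(\Sigma,\mathbb R)$, the Aubry set satisfies $$\mathcal A(A)=\bigcap_{F\in\mathcal S(A)} I_F^{-1}\{0\}.$$
   Context: $\Sigma=\{1,\dots,d\}^{\mathbb N}$, $T$ the left shift, metric $d(\omega,\nu)=\lambda^N$, $N=\min\{k:\omega_k\ne\nu_k\}$, $0<\lambda<1$. $m_A=\max\{\int A\,d\mu:\mu\ T\text{-invariant}\}$. A calibrated sub-action for $A$ is a continuous $F$ with $F(x)=\max_{Ty=x}[F(y)+A(y)-m_A]$; $\mathcal S(A)$ is the set of $\alpha$-Hölder calibrated sub-actions. $R_F(x)=F(Tx)-F(x)-A(x)+m_A\ge0$ and $I_F(x)=\sum_{i\ge0}R_F(T^ix)\in[0,\infty]$. Mañé potential $S_A(x,y)=\lim_{\epsilon\to0}\sup\{\sum_{i=0}^{n-1}[A(T^iz)-m_A]:n\in\mathbb N,\ T^nz=y,\ d(z,x)<\epsilon\}$; Aubry set $\mathcal A(A)=\{x:S_A(x,x)=0\}$. *)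

From Stdlib Require Import Reals Lra Lia Classical ClassicalEpsilon.
Open Scope R_scope.

Definition Symb (d : nat) : Type := {k : nat | (1 <= k <= d)%nat}.

(* Sigma = {1..d}^N ; the coordinate omega_{k+1} of the paper is (x k). *)
Definition Sigma (d : nat) : Type := nat -> Symb d.

Definition seq_eq {d : nat} (x y : Sigma d) : Prop := forall k, x k = y k.

Definition shift {d : nat} (x : Sigma d) : Sigma d := fun k => x (S k).
Definition shiftn {d : nat} (n : nat) (x : Sigma d) : Sigma d :=
  fun k => x (n + k)%nat.

Definition first_diff {d : nat} (x y : Sigma d) (N0 : nat) : Prop :=
  x N0 <> y N0 /\ forall k, (k < N0)%nat -> x k = y k.

(* d(x,y) = lam^N with N = min{k >= 1 : omega_k <> nu_k} = N0 + 1; 0 if x = y. *)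
Definition dist {d : nat} (lam : R) (x y : Sigma d) : R :=
  match excluded_middle_informative (exists N0, first_diff x y N0) with
  | left H => lam ^ (S (proj1_sig (constructive_indefinite_description _ H)))
  | right _ => 0
  end.

Definition continuous_on_Sigma {d : nat} (lam : R) (f : Sigma d -> R) : Prop :=
  forall x eps, 0 < eps -> exists del, 0 < del /\
    forall y, dist lam x y < del -> Rabs (f y - f x) < eps.

Definition holder {d : nat} (lam alpha : R) (f : Sigma d -> R) : Prop :=
  exists C, forall x y, 0 < dist lam x y ->
    Rabs (f x - f y) <= C * Rpower (dist lam x y) alpha.

(* T-invariant Borel probability measures, represented (Riesz) as positive,
   normalized, T-invariant linear functionals on C(Sigma,R). *)
Definition invariant_prob {d : nat} (lam : R) (mu : (Sigma d -> R) -> R) : Prop :=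
  (forall f g a b, continuous_on_Sigma lam f -> continuous_on_Sigma lam g ->
     mu (fun x => a * f x + b * g x) = a * mu f + b * mu g) /\
  (forall f, continuous_on_Sigma lam f -> (forall x, 0 <= f x) -> 0 <= mu f) /\
  mu (fun _ => 1) = 1 /\
  (forall f, continuous_on_Sigma lam f -> mu (fun x => f (shift x)) = mu f).

Definition is_mA {d : nat} (lam : R) (A : Sigma d -> R) (m : R) : Prop :=
  (exists mu, invariant_prob lam mu /\ mu A = m) /\
  (forall mu, invariant_prob lam mu -> mu A <= m).

Definition calibrated {d : nat} (lam : R) (A : Sigma d -> R) (m : R)
  (F : Sigma d -> R) : Prop :=
  continuous_on_Sigma lam F /\
  forall x,
    (forall y, seq_eq (shift y) x -> F y + A y - m <= F x) /\
    (exists y, seq_eq (shift y) x /\ F y + A y - m = F x).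

Definition in_SA {d : nat} (lam alpha : R) (A : Sigma d -> R) (m : R)
  (F : Sigma d -> R) : Prop :=
  holder lam alpha F /\ calibrated lam A m F.

Definition R_F {d : nat} (A : Sigma d -> R) (m : R) (F : Sigma d -> R)
  (x : Sigma d) : R := F (shift x) - F x - A x + m.

Definition I_F_zero {d : nat} (A : Sigma d -> R) (m : R) (F : Sigma d -> R)
  (x : Sigma d) : Prop :=
  Un_cv (fun n => sum_f_R0 (fun i => R_F A m F (shiftn i x)) n) 0.

Fixpoint bsum (f : nat -> R) (n : nat) : R :=
  match n with O => 0 | S k => bsum f k + f k end.

Definition mane_set {d : nat} (lam : R) (A : Sigma d -> R) (m : R)
  (x y : Sigma d) (eps : R) (v : R) : Prop :=
  exists (n : nat) (z : Sigma d), (1 <= n)%nat /\ seq_eq (shiftn n z) y /\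
    dist lam z x < eps /\ v = bsum (fun i => A (shiftn i z) - m) n.

(* S_A(x,y) = L : the sup (a real number for small eps) tends to L as eps -> 0+. *)
Definition mane_potential_eq {d : nat} (lam : R) (A : Sigma d -> R) (m : R)
  (x y : Sigma d) (L : R) : Prop :=
  forall eta, 0 < eta -> exists del, 0 < del /\
    forall eps, 0 < eps < del ->
      exists s, is_lub (mane_set lam A m x y eps) s /\ Rabs (s - L) < eta.

Definition aubry {d : nat} (lam : R) (A : Sigma d -> R) (m : R) (x : Sigma d) : Prop :=
  mane_potential_eq lam A m x x 0.

(* Both sides are equivalent to the existence of loops z -> T^k z = x, with z arbitrarily close
   to x, along which the Birkhoff sum S_k(A - m) is almost nonnegative.  Such sums are always
   almost nonpositive: a loop is shadowed by a periodic orbit, whose average of A is at most m.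
   For a calibrated Hölder F one has R_F >= 0 and S_k(A - m) = F(T^k z) - F(z) - sum R_F, so these
   loops make the partial sums of I_F(x) vanish.  Conversely, take a point c = T^a x to whose
   cylinder [c]_M the orbit of x returns infinitely often, and the calibrated sub-action
   u(y) = inf_K sup { S_n z : z in [c]_M, T^n z = y, n > K + M }.  If I_u(x) = 0 then
   S_n(x) = u(T^n x) - u(x), which with the returns gives u(c) >= -small; a near-optimal chain
   for u(x), spliced behind the first a symbols of x, is then the required loop. *)

From Stdlib Require Import Reals Lra Lia Classical ClassicalEpsilon FunctionalExtensionality ProofIrrelevance.
Open Scope R_scope.

Lemma Rabs_le_inv a c : Rabs a <= c -> - c <= a <= c.
Proof. intros H. pose proof (Rle_abs a). pose proof (Rle_abs (- a)). rewrite Rabs_Ropp in H1. lra. Qed.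

Section Words.
Context {d : nat}.

Definition agree (N : nat) (x y : Sigma d) : Prop := forall k, (k < N)%nat -> x k = y k.

Definition concat (n : nat) (w y : Sigma d) : Sigma d :=
  fun k => if Nat.ltb k n then w k else y (k - n)%nat.

Definition scons (s : Symb d) (y : Sigma d) : Sigma d :=
  fun k => match k with O => s | S k' => y k' end.

Lemma agree_sym N (x y : Sigma d) : agree N x y -> agree N y x.
Proof. intros H k Hk; symmetry; auto. Qed.

Lemma agree_le N N' (x y : Sigma d) : (N' <= N)%nat -> agree N x y -> agree N' x y.
Proof. intros H1 H k Hk; apply H; lia. Qed.

Lemma agree_shiftn i N (x y : Sigma d) : agree (i + N) x y -> agree N (shiftn i x) (shiftn i y).
Proof. intros H k Hk; unfold shiftn; apply H; lia. Qed.

Lemma seq_eq_eq (x y : Sigma d) : seq_eq x y -> x = y.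
Proof. intros H; apply functional_extensionality; exact H. Qed.

Lemma shiftn_0 (x : Sigma d) : shiftn 0 x = x.
Proof. reflexivity. Qed.

Lemma shiftn_add a b (x : Sigma d) : shiftn a (shiftn b x) = shiftn (b + a) x.
Proof. apply functional_extensionality; intros k; unfold shiftn; f_equal; lia. Qed.

Lemma shift_shiftn n (x : Sigma d) : shift (shiftn n x) = shiftn (S n) x.
Proof. apply functional_extensionality; intros k; unfold shiftn, shift; f_equal; lia. Qed.

Lemma shiftn_concat n (w y : Sigma d) : shiftn n (concat n w y) = y.
Proof.
  apply functional_extensionality; intros k; unfold shiftn, concat.
  destruct (Nat.ltb_spec (n + k) n); [lia|]. f_equal; lia.
Qed.

Lemma concat_shiftn n (z : Sigma d) : concat n z (shiftn n z) = z.
Proof.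
  apply functional_extensionality; intros k; unfold concat, shiftn.
  destruct (Nat.ltb_spec k n); [auto|f_equal; lia].
Qed.

Lemma agree_concat n (w y : Sigma d) : agree n (concat n w y) w.
Proof. intros k Hk; unfold concat. destruct (Nat.ltb_spec k n); [auto|lia]. Qed.

Lemma agree_concat_tail n N (w y y' : Sigma d) :
  agree N y y' -> agree (n + N) (concat n w y) (concat n w y').
Proof.
  intros H k Hk; unfold concat. destruct (Nat.ltb_spec k n); auto. apply H; lia.
Qed.

Lemma shift_scons s (y : Sigma d) : shift (scons s y) = y.
Proof. reflexivity. Qed.

Lemma scons_shift (y : Sigma d) : y = scons (y O) (shift y).
Proof. apply functional_extensionality; intros [|k]; reflexivity. Qed.

End Words.

Lemma bsum_ext f g n : (forall i, (i < n)%nat -> f i = g i) -> bsum f n = bsum g n.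
Proof.
  induction n; simpl; intros H; auto.
  rewrite IHn by (intros; apply H; lia). rewrite H by lia; auto.
Qed.

Lemma bsum_add f a b : bsum f (a + b) = bsum f a + bsum (fun i => f (a + i)%nat) b.
Proof.
  induction b; simpl; [rewrite Nat.add_0_r; ring|].
  rewrite Nat.add_succ_r; simpl; rewrite IHb; ring.
Qed.

Lemma bsum_le f g n : (forall i, (i < n)%nat -> f i <= g i) -> bsum f n <= bsum g n.
Proof.
  induction n; simpl; intros H; [lra|].
  pose proof (H n ltac:(lia)). pose proof (IHn ltac:(intros; apply H; lia)). lra.
Qed.

Lemma bsum_nonneg f n : (forall i, 0 <= f i) -> 0 <= bsum f n.
Proof. intros H; induction n; simpl; [lra|]. specialize (H n); lra. Qed.

Lemma bsum_mono f a b : (forall i, 0 <= f i) -> (a <= b)%nat -> bsum f a <= bsum f b.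
Proof.
  intros H Hab. replace b with (a + (b - a))%nat by lia. rewrite bsum_add.
  pose proof (bsum_nonneg (fun i => f (a + i)%nat) (b - a) (fun i => H _)); lra.
Qed.

Lemma bsum_lin f g a b n : bsum (fun i => a * f i + b * g i) n = a * bsum f n + b * bsum g n.
Proof. induction n; simpl; [ring|]. rewrite IHn; ring. Qed.

Lemma bsum_const c n : bsum (fun _ => c) n = INR n * c.
Proof. induction n; simpl bsum; [simpl; ring|]. rewrite IHn, S_INR; ring. Qed.

Lemma bsum_minus f c n : bsum (fun i => f i - c) n = bsum f n - INR n * c.
Proof. induction n; simpl bsum; [simpl; ring|]. rewrite IHn, S_INR; ring. Qed.

Lemma bsum_succ_index g n : bsum (fun i => g (S i)) n = bsum g n + g n - g O.
Proof. induction n; simpl; [ring|]. rewrite IHn; ring. Qed.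

Lemma bsum_head f n : bsum f (S n) = f O + bsum (fun i => f (S i)) n.
Proof. induction n; simpl in *; [ring|]. rewrite IHn; ring. Qed.

Lemma bsum_abs_sub f g n : Rabs (bsum f n - bsum g n) <= bsum (fun i => Rabs (f i - g i)) n.
Proof.
  induction n; simpl; [rewrite Rminus_0_r, Rabs_R0; lra|].
  replace (bsum f n + f n - (bsum g n + g n)) with ((bsum f n - bsum g n) + (f n - g n)) by ring.
  pose proof (Rabs_triang (bsum f n - bsum g n) (f n - g n)). lra.
Qed.

Lemma sum_f_R0_bsum f n : sum_f_R0 f n = bsum f (S n).
Proof. induction n; [simpl; ring|]. simpl sum_f_R0. rewrite IHn; reflexivity. Qed.

(* Each return of [rz] to [r] after [k] steps costs at most [delta + rho]. *)
Lemma bsum_le_of_return (r rz : nat -> R) (k n : nat) (delta rho : R) :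
  (1 <= k)%nat -> (forall i, 0 <= rz i) -> (forall i, rz (k + i)%nat = r i) ->
  bsum rz k <= delta -> 0 <= rho ->
  (forall j, (j <= n)%nat -> bsum r j <= bsum rz j + rho) ->
  forall j, (j <= n)%nat -> bsum r j <= INR j * (delta + rho).
Proof.
  intros Hk Hrz Hret Hdelta Hrho Hcmp j.
  assert (Hdelta0 : 0 <= delta) by (pose proof (bsum_nonneg rz k Hrz); lra).
  induction j as [j IH] using (well_founded_induction Wf_nat.lt_wf). intros Hj.
  destruct j as [|j]; [simpl; lra|].
  pose proof (Hcmp (S j) Hj) as Hc.
  destruct (Compare_dec.le_lt_dec (S j) k) as [Hle|Hlt].
  - pose proof (bsum_mono rz (S j) k Hrz Hle).
    assert (1 <= INR (S j)) by (rewrite S_INR; pose proof (pos_INR j); lra). nra.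
  - replace (S j) with (k + (S j - k))%nat in Hc at 2 by lia.
    rewrite bsum_add, (bsum_ext (fun i => rz (k + i)%nat) r) in Hc by (intros; apply Hret).
    specialize (IH (S j - k)%nat ltac:(lia) ltac:(lia)).
    assert (INR (S j - k) + 1 <= INR (S j)).
    { rewrite minus_INR by lia. assert (1 <= INR k) by (apply (le_INR 1); lia). lra. }
    nra.
Qed.

Lemma pow_antitone b a c : 0 <= b <= 1 -> (a <= c)%nat -> b ^ c <= b ^ a.
Proof.
  intros Hb Hac. induction Hac; [lra|]. simpl.
  assert (0 <= b ^ m) by (apply pow_le; lra). nra.
Qed.

Lemma exists_mul_pow_lt b c eps : 0 <= b < 1 -> 0 < eps -> exists N, c * b ^ N < eps.
Proof.
  intros Hb He. destruct (Rle_lt_dec c 0).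
  - exists O; simpl; lra.
  - assert (Habs : Rabs b < 1) by (rewrite Rabs_right; lra).
    destruct (pow_lt_1_zero b Habs (eps / c)) as [N HN]; [apply Rdiv_lt_0_compat; lra|].
    exists N. specialize (HN N (le_n _)).
    rewrite Rabs_right in HN by (apply Rle_ge, pow_le; lra).
    apply (Rmult_lt_compat_l c) in HN; [|lra].
    replace (c * (eps / c)) with eps in HN by (field; lra). lra.
Qed.

Section Metric.
Context {d : nat} (lam : R).

Lemma first_diff_exists (x y : Sigma d) : (exists k, x k <> y k) -> exists N0, first_diff x y N0.
Proof.
  intros [k Hk]. revert Hk.
  induction k as [k IH] using (well_founded_induction Wf_nat.lt_wf). intros Hk.
  destruct (classic (exists j, (j < k)%nat /\ x j <> y j)) as [[j [Hj1 Hj2]]|Hn].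
  - exact (IH j Hj1 Hj2).
  - exists k; split; auto. intros j Hj. apply NNPP; intro; apply Hn; eauto.
Qed.

Lemma dist_cases (x y : Sigma d) :
  (dist lam x y = 0 /\ seq_eq x y) \/
  (exists N0, first_diff x y N0 /\ dist lam x y = lam ^ (S N0)).
Proof.
  unfold dist. destruct (excluded_middle_informative _) as [H|H].
  - right. destruct (constructive_indefinite_description _ H) as [N0 HN0]; simpl. eauto.
  - left. split; auto. intros k. apply NNPP; intro Hk. apply H, first_diff_exists; eauto.
Qed.

Lemma dist_le_of_agree (Hlam : 0 < lam < 1) N (x y : Sigma d) : agree N x y -> dist lam x y <= lam ^ (S N).
Proof.
  intros H. destruct (dist_cases x y) as [[H0 _]|[N0 [[HN1 HN2] H0]]].
  - rewrite H0; apply pow_le; lra.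
  - rewrite H0. apply pow_antitone; [lra|].
    destruct (Compare_dec.le_lt_dec N N0); [lia|]. exfalso; apply HN1, H; auto.
Qed.

Lemma agree_of_dist_lt (Hlam : 0 < lam < 1) N (x y : Sigma d) : dist lam x y < lam ^ N -> agree N x y.
Proof.
  intros H k Hk. apply NNPP; intro Hne.
  destruct (dist_cases x y) as [[_ Hall]|[N0 [[HN1 HN2] H0]]]; [apply Hne, Hall|].
  assert (N0 <= k)%nat.
  { destruct (Compare_dec.le_lt_dec N0 k); auto. exfalso; apply Hne, HN2; auto. }
  rewrite H0 in H. assert (lam ^ N <= lam ^ S N0) by (apply pow_antitone; [lra|lia]). lra.
Qed.

Lemma continuous_const (c : R) : continuous_on_Sigma (d:=d) lam (fun _ => c).
Proof. intros x eps He. exists 1; split; [lra|]. intros; rewrite Rminus_diag, Rabs_R0; lra. Qed.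

Lemma continuous_lin (f g : Sigma d -> R) a b :
  continuous_on_Sigma lam f -> continuous_on_Sigma lam g ->
  continuous_on_Sigma lam (fun y => a * f y + b * g y).
Proof.
  intros Hf Hg x eps He.
  pose proof (Rabs_pos a); pose proof (Rabs_pos b).
  set (e := eps / (2 * (Rabs a + Rabs b + 1))).
  assert (He' : 0 < e) by (apply Rdiv_lt_0_compat; lra).
  destruct (Hf x e He') as [d1 [Hd1 H1]]. destruct (Hg x e He') as [d2 [Hd2 H2]].
  exists (Rmin d1 d2); split; [apply Rmin_pos; auto|]. intros y Hy.
  specialize (H1 y ltac:(pose proof (Rmin_l d1 d2); lra)).
  specialize (H2 y ltac:(pose proof (Rmin_r d1 d2); lra)).
  replace (a * f y + b * g y - (a * f x + b * g x)) with (a * (f y - f x) + b * (g y - g x)) by ring.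
  eapply Rle_lt_trans; [apply Rabs_triang|]. rewrite !Rabs_mult.
  assert (Rabs a * Rabs (f y - f x) <= Rabs a * e) by (apply Rmult_le_compat_l; lra).
  assert (Rabs b * Rabs (g y - g x) <= Rabs b * e) by (apply Rmult_le_compat_l; lra).
  assert ((Rabs a + Rabs b) * e < eps).
  { apply (Rmult_lt_reg_r (2 * (Rabs a + Rabs b + 1))); [lra|].
    unfold e; field_simplify; [nra|lra]. }
  lra.
Qed.

Lemma continuous_shiftn (Hlam : 0 < lam < 1) (f : Sigma d -> R) n :
  continuous_on_Sigma lam f -> continuous_on_Sigma lam (fun y => f (shiftn n y)).
Proof.
  intros Hf x eps He. destruct (Hf (shiftn n x) eps He) as [del [Hd H]].
  destruct (exists_mul_pow_lt lam 1 del ltac:(lra) Hd) as [N HN].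
  exists (lam ^ (n + N)); split; [apply pow_lt; lra|]. intros y Hy.
  apply H. apply (agree_of_dist_lt Hlam), agree_shiftn, (dist_le_of_agree Hlam) in Hy.
  assert (lam ^ S N <= lam ^ N) by (apply pow_antitone; [lra|lia]). lra.
Qed.

Lemma invariant_prob_const mu (c : R) : invariant_prob (d:=d) lam mu -> mu (fun _ => c) = c.
Proof.
  intros [Hlin [_ [H1 _]]].
  pose proof (Hlin _ _ c 0 (continuous_const 1) (continuous_const 1)) as H. cbv beta in H.
  replace (fun _ : Sigma d => c * 1 + 0 * 1) with (fun _ : Sigma d => c) in H
    by (apply functional_extensionality; intros; ring).
  rewrite H, H1; ring.
Qed.

Lemma invariant_prob_shiftn (Hlam : 0 < lam < 1) mu (f : Sigma d -> R) n : invariant_prob lam mu ->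
  continuous_on_Sigma lam f -> mu (fun y => f (shiftn n y)) = mu f.
Proof.
  intros Hmu Hf. induction n; [reflexivity|].
  rewrite <- IHn. destruct Hmu as [_ [_ [_ Hinv]]].
  rewrite <- (Hinv (fun y => f (shiftn n y))) by (apply continuous_shiftn; auto).
  reflexivity.
Qed.

Definition periodic_measure (n : nat) (w : Sigma d) : (Sigma d -> R) -> R :=
  fun f => bsum (fun i => f (shiftn i w)) n / INR n.

Lemma periodic_measure_invariant n (w : Sigma d) :
  (1 <= n)%nat -> (forall k, w (n + k)%nat = w k) -> invariant_prob lam (periodic_measure n w).
Proof.
  intros Hn Hw. assert (HnR : 0 < INR n) by (apply lt_0_INR; lia).
  unfold periodic_measure; repeat split.
  - intros f g a b _ _. rewrite (bsum_lin (fun i => f (shiftn i w)) (fun i => g (shiftn i w))).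
    field; lra.
  - intros f _ Hf.
    apply Rmult_le_pos; [apply bsum_nonneg; intros; apply Hf|apply Rlt_le, Rinv_0_lt_compat; lra].
  - rewrite bsum_const. field; lra.
  - intros f _. f_equal.
    rewrite (bsum_ext _ (fun i => f (shiftn (S i) w))) by (intros; rewrite shift_shiftn; auto).
    rewrite (bsum_succ_index (fun i => f (shiftn i w))).
    assert (E : shiftn n w = shiftn 0 w) by (apply functional_extensionality; intros k; apply Hw).
    rewrite E; ring.
Qed.

End Metric.

Definition periodize {d} (n : nat) (z : Sigma d) : Sigma d := fun k => z (k mod n)%nat.

Lemma periodize_periodic {d} n (z : Sigma d) k : periodize n z (n + k)%nat = periodize n z k.
Proof.
  unfold periodize. f_equal. replace (n + k)%nat with (k + 1 * n)%nat by lia.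
  apply Nat.Div0.mod_add.
Qed.

Lemma agree_periodize {d} n N (z : Sigma d) :
  (1 <= n)%nat -> agree N z (shiftn n z) -> agree (n + N) z (periodize n z).
Proof.
  intros Hn Hag j. induction j as [j IH] using (well_founded_induction Wf_nat.lt_wf). intros Hj.
  destruct (Compare_dec.le_lt_dec n j) as [Hle|Hlt].
  - replace j with (n + (j - n))%nat at 1 2 by lia. rewrite periodize_periodic.
    change (z (n + (j - n))%nat) with (shiftn n z (j - n)%nat).
    rewrite <- Hag, IH by lia. reflexivity.
  - unfold periodize. rewrite Nat.mod_small by lia. reflexivity.
Qed.

(* For [b = lam^alpha] this is [holder lam alpha f] up to the constant. *)
Definition cyl_holder {d} (f : Sigma d -> R) (C b : R) : Prop :=
  forall N x y, agree N x y -> Rabs (f x - f y) <= C * b ^ N.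

Lemma Rpower_lt_1 lam alpha : 0 < lam < 1 -> 0 < alpha -> 0 < Rpower lam alpha < 1.
Proof.
  intros Hl Ha. split; [apply exp_pos|].
  unfold Rpower. rewrite <- exp_0. apply exp_increasing.
  assert (ln lam < 0) by (rewrite <- ln_1; apply ln_increasing; lra). nra.
Qed.

Lemma Rpower_pow_base lam alpha n : 0 < lam -> Rpower (lam ^ n) alpha = Rpower lam alpha ^ n.
Proof.
  intros Hl. rewrite <- (Rpower_pow n lam Hl), Rpower_mult.
  rewrite <- (Rpower_pow n (Rpower lam alpha)) by apply exp_pos.
  rewrite Rpower_mult. f_equal; ring.
Qed.

Lemma holder_cyl_holder {d} lam alpha (f : Sigma d -> R) : 0 < lam < 1 -> 0 < alpha ->
  holder lam alpha f -> exists C, 0 <= C /\ cyl_holder f C (Rpower lam alpha).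
Proof.
  intros Hl Ha [C HC]. pose proof (Rpower_lt_1 lam alpha Hl Ha) as Hb.
  exists (Rabs C); split; [apply Rabs_pos|]. intros N x y Hxy.
  pose proof (Rle_abs C). pose proof (Rabs_pos C).
  destruct (dist_cases lam x y) as [[_ Hall]|[N0 [[HN1 HN2] Hdist]]].
  - rewrite (seq_eq_eq x y Hall), Rminus_diag, Rabs_R0.
    apply Rmult_le_pos; [lra|apply pow_le; lra].
  - assert (Hd : 0 < dist lam x y) by (rewrite Hdist; apply pow_lt; lra).
    eapply Rle_trans; [apply HC; exact Hd|]. rewrite Hdist, Rpower_pow_base by lra.
    assert (N <= N0)%nat.
    { destruct (Compare_dec.le_lt_dec N N0); auto. exfalso; apply HN1, Hxy; auto. }
    assert (Rpower lam alpha ^ S N0 <= Rpower lam alpha ^ N) by (apply pow_antitone; [lra|lia]).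
    assert (0 <= Rpower lam alpha ^ S N0) by (apply pow_le; lra).
    nra.
Qed.

Lemma cyl_holder_holder {d} lam alpha (f : Sigma d -> R) C : 0 < lam < 1 -> 0 < alpha ->
  cyl_holder f C (Rpower lam alpha) -> holder lam alpha f.
Proof.
  intros Hl Ha H. pose proof (Rpower_lt_1 lam alpha Hl Ha) as Hb.
  exists (C / Rpower lam alpha). intros x y Hd.
  destruct (dist_cases lam x y) as [[H0 _]|[N0 [[HN1 HN2] H0]]]; [lra|].
  rewrite H0, Rpower_pow_base by lra. eapply Rle_trans; [apply (H N0); exact HN2|].
  simpl. right. field. lra.
Qed.

Lemma cyl_holder_continuous {d} lam (f : Sigma d -> R) C b : 0 < lam < 1 -> 0 <= b < 1 ->
  cyl_holder f C b -> continuous_on_Sigma lam f.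
Proof.
  intros Hl Hb H x eps He. destruct (exists_mul_pow_lt b C eps Hb He) as [N HN].
  exists (lam ^ N); split; [apply pow_lt; lra|]. intros y Hy.
  apply (agree_of_dist_lt lam Hl) in Hy. eapply Rle_lt_trans; [|exact HN].
  rewrite Rabs_minus_sym. apply H. exact Hy.
Qed.

(* Junk value [0] when [E] has no least upper bound. *)
Definition lub_of (E : R -> Prop) : R :=
  match excluded_middle_informative (exists s, is_lub E s) with
  | left H => proj1_sig (constructive_indefinite_description _ H)
  | right _ => 0
  end.

Lemma lub_of_spec E : (exists v, E v) -> (exists B, forall v, E v -> v <= B) -> is_lub E (lub_of E).
Proof.
  intros Hne [B HB]. unfold lub_of. destruct (excluded_middle_informative _) as [H|H].
  - destruct (constructive_indefinite_description _ H); simpl; auto.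
  - exfalso. destruct (completeness E) as [s Hs]; [exists B; intros v Hv; auto|auto|].
    apply H; eauto.
Qed.

Lemma lub_approx (E : R -> Prop) s eta : is_lub E s -> 0 < eta -> exists v, E v /\ s - eta < v.
Proof.
  intros [H1 H2] He. apply NNPP; intro Hn.
  assert (s <= s - eta); [|lra]. apply H2. intros v Hv. apply Rnot_lt_le; intro; apply Hn; eauto.
Qed.

Lemma eventually_forall_le (n : nat) (P : nat -> nat -> Prop) :
  (forall s, (s <= n)%nat -> exists K0, forall K, (K0 <= K)%nat -> P s K) ->
  exists K0, forall K, (K0 <= K)%nat -> forall s, (s <= n)%nat -> P s K.
Proof.
  induction n; intros H.
  - destruct (H 0%nat (le_n _)) as [K0 HK0]. exists K0. intros K HK s Hs.
    replace s with 0%nat by lia. auto.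
  - destruct IHn as [K1 HK1]; [intros s Hs; apply H; lia|].
    destruct (H (S n) (le_n _)) as [K2 HK2]. exists (Nat.max K1 K2). intros K HK s Hs.
    destruct (Nat.eq_dec s (S n)) as [->|Hne]; [apply HK2; lia|apply HK1; lia].
Qed.

Lemma eventually_forall_symb {d} (P : Symb d -> nat -> Prop) :
  (forall s, exists K0, forall K, (K0 <= K)%nat -> P s K) ->
  exists K0, forall K, (K0 <= K)%nat -> forall s, P s K.
Proof.
  intros H.
  destruct (eventually_forall_le d (fun s K => forall Hs : (1 <= s <= d)%nat, P (exist _ s Hs) K))
    as [K0 HK0].
  - intros s _. destruct (classic (1 <= s <= d)%nat) as [Hs|Hs].
    + destruct (H (exist _ s Hs)) as [K0 HK0]. exists K0. intros K HK Hs'.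
      rewrite (proof_irrelevance _ Hs' Hs). auto.
    + exists O. intros K _ Hs'. contradiction.
  - exists K0. intros K HK [s Hs]. apply (HK0 K HK s); lia.
Qed.

(* Pigeonhole over the finitely many cylinders of length [M]. *)
Lemma recurrent_cylinder {d} (M : nat) : forall (P : nat -> Prop) (ys : nat -> Sigma d),
  (forall K, exists n, (K <= n)%nat /\ P n) ->
  exists a, P a /\ forall K, exists n, (K <= n)%nat /\ P n /\ agree M (ys n) (ys a).
Proof.
  induction M; intros P ys Hinf.
  - destruct (Hinf 0%nat) as [a [_ Ha]]. exists a; split; auto. intros K.
    destruct (Hinf K) as [n [Hn1 Hn2]]. exists n; repeat split; auto. intros k Hk; lia.
  - assert (Hs : exists s, forall K, exists n, (K <= n)%nat /\ P n /\ ys n O = s).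
    { apply NNPP; intro Hn.
      destruct (eventually_forall_symb (fun s K => forall n, (K <= n)%nat -> P n -> ys n O <> s))
        as [K0 HK0].
      - intros s. apply NNPP; intro Hs. apply Hn. exists s. intros K. apply NNPP; intro HK.
        apply Hs. exists K. intros K' HK' n Hn' HP Heq. apply HK. exists n; repeat split; auto; lia.
      - destruct (Hinf K0) as [n [Hn1 Hn2]]. exact (HK0 K0 (le_n _) (ys n O) n Hn1 Hn2 eq_refl). }
    destruct Hs as [s Hs].
    destruct (IHM (fun n => P n /\ ys n O = s) (fun n => shift (ys n))) as [a [[Ha1 Ha2] Ha3]].
    { intros K. destruct (Hs K) as [n [H1 [H2 H3]]]. exists n; auto. }
    exists a; split; auto. intros K. destruct (Ha3 K) as [n [Hn1 [[Hn2 Hn3] Hn4]]].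
    exists n; repeat split; auto. intros [|k] Hk; [congruence|apply (Hn4 k); lia].
Qed.

Section BirkhoffSums.
Context {d : nat} (lam : R) (A : Sigma d -> R) (m CA b : R).
Hypothesis Hlam : 0 < lam < 1.
Hypothesis Hb : 0 <= b < 1.
Hypothesis HCA : 0 <= CA.
Hypothesis HA : cyl_holder A CA b.

Definition birkhoff (n : nat) (z : Sigma d) : R := bsum (fun i => A (shiftn i z) - m) n.

Let distortion := CA / (1 - b).

Lemma distortion_nonneg : 0 <= distortion.
Proof. apply Rmult_le_pos; [lra|apply Rlt_le, Rinv_0_lt_compat; lra]. Qed.

Lemma birkhoff_S n z : birkhoff (S n) z = birkhoff n z + (A (shiftn n z) - m).
Proof. reflexivity. Qed.

Lemma birkhoff_add a n z : birkhoff (a + n) z = birkhoff a z + birkhoff n (shiftn a z).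
Proof.
  unfold birkhoff. rewrite bsum_add. f_equal.
  apply bsum_ext; intros i _. rewrite shiftn_add. reflexivity.
Qed.

Lemma birkhoff_head n z : birkhoff (S n) z = (A z - m) + birkhoff n (shift z).
Proof. unfold birkhoff. rewrite bsum_head. reflexivity. Qed.

Lemma birkhoff_distortion_sharp N n z z' : agree (n + N) z z' ->
  Rabs (birkhoff n z - birkhoff n z') <= distortion * (b ^ N - b ^ (N + n)).
Proof.
  revert z z'. induction n as [|n IH]; intros z z' Hzz.
  - unfold birkhoff; simpl. rewrite Nat.add_0_r, Rminus_0_r, Rabs_R0. right; ring.
  - rewrite !birkhoff_head.
    assert (H1 : Rabs (A z - A z') <= CA * b ^ (S n + N)) by (apply HA; exact Hzz).
    assert (H2 := IH (shift z) (shift z') (fun k Hk => Hzz (S k) ltac:(lia))).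
    replace (A z - m + birkhoff n (shift z) - (A z' - m + birkhoff n (shift z')))
      with ((A z - A z') + (birkhoff n (shift z) - birkhoff n (shift z'))) by ring.
    eapply Rle_trans; [apply Rabs_triang|].
    replace (S n + N)%nat with (S (N + n)) in H1 by lia.
    replace (N + S n)%nat with (S (N + n)) by lia.
    simpl in H1 |- *. set (p := b ^ (N + n)) in *.
    assert (0 <= p) by (apply pow_le; lra).
    assert (CA * (b * p) <= CA * p) by (apply Rmult_le_compat_l; nra).
    assert (distortion * (b ^ N - b * p) = distortion * (b ^ N - p) + CA * p)
      by (unfold distortion; field; lra).
    lra.
Qed.

Lemma birkhoff_distortion N n z z' : agree (n + N) z z' ->
  Rabs (birkhoff n z - birkhoff n z') <= distortion * b ^ N.
Proof.
  intros H. eapply Rle_trans; [apply (birkhoff_distortion_sharp N n z z' H)|].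
  pose proof distortion_nonneg. assert (0 <= b ^ (N + n)) by (apply pow_le; lra). nra.
Qed.

Lemma birkhoff_lower_bound w n z : - INR n * (CA + Rabs (A w - m)) <= birkhoff n z.
Proof.
  induction n; [unfold birkhoff; simpl; lra|].
  rewrite birkhoff_S, S_INR.
  assert (H : Rabs (A (shiftn n z) - A w) <= CA)
    by (rewrite <- (Rmult_1_r CA); apply (HA 0%nat); intros k Hk; lia).
  replace (A (shiftn n z) - m) with ((A (shiftn n z) - A w) + (A w - m)) by ring.
  apply Rabs_le_inv in H. pose proof (Rle_abs (A w - m)). pose proof (Rle_abs (- (A w - m))).
  rewrite Rabs_Ropp in H1. lra.
Qed.

Lemma continuous_A : continuous_on_Sigma lam A.
Proof. exact (cyl_holder_continuous lam A CA b Hlam Hb HA). Qed.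

Lemma continuous_birkhoff n : continuous_on_Sigma lam (birkhoff n).
Proof.
  induction n; [apply continuous_const|].
  pose proof (continuous_lin lam _ _ 1 1 IHn (continuous_shiftn lam Hlam A n continuous_A)) as H.
  pose proof (continuous_lin lam _ (fun _ => 1) 1 (-m) H (continuous_const lam 1)) as H2.
  replace (birkhoff (S n)) with (fun y => 1 * (1 * birkhoff n y + 1 * A (shiftn n y)) + - m * 1);
    auto.
  apply functional_extensionality; intros y; rewrite birkhoff_S; ring.
Qed.

Lemma invariant_prob_birkhoff mu n : invariant_prob lam mu -> mu A = m -> mu (birkhoff n) = 0.
Proof.
  intros Hmu HmA. pose proof Hmu as [Hlin [_ [H1 _]]].
  induction n; [exact (invariant_prob_const lam mu 0 Hmu)|].
  replace (birkhoff (S n))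
    with (fun y => 1 * birkhoff n y + 1 * (fun y => 1 * A (shiftn n y) + (-m) * 1) y)
    by (apply functional_extensionality; intros y; rewrite birkhoff_S; ring).
  assert (HAn : continuous_on_Sigma lam (fun y => A (shiftn n y)))
    by exact (continuous_shiftn lam Hlam A n continuous_A).
  rewrite Hlin, IHn, Hlin, (invariant_prob_shiftn lam Hlam mu A n Hmu continuous_A), HmA, H1;
    auto using continuous_const, continuous_birkhoff, continuous_lin.
  ring.
Qed.

Section Maximizing.
Hypothesis Hmax : forall mu, invariant_prob lam mu -> mu A <= m.

(* Closing lemma: a loop is shadowed by a periodic orbit, whose Birkhoff sum is [<= 0]. *)
Lemma birkhoff_loop_le n N z : (1 <= n)%nat -> agree N z (shiftn n z) ->
  birkhoff n z <= distortion * b ^ N.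
Proof.
  intros Hn Hag. set (w := periodize n z).
  assert (Hper : birkhoff n w <= 0).
  { specialize (Hmax _ (periodic_measure_invariant lam n w Hn (periodize_periodic n z))).
    unfold periodic_measure in Hmax. unfold birkhoff. rewrite bsum_minus.
    assert (HnR : 0 < INR n) by (apply lt_0_INR; lia).
    apply (Rmult_le_compat_r (INR n)) in Hmax; [|lra].
    unfold Rdiv in Hmax. rewrite Rmult_assoc, Rinv_l, Rmult_1_r in Hmax by lra. lra. }
  pose proof (birkhoff_distortion N n z w (agree_periodize n N z Hn Hag)).
  pose proof (Rle_abs (birkhoff n z - birkhoff n w)). lra.
Qed.

Hypothesis Hattained : exists mu, invariant_prob lam mu /\ mu A = m.

Lemma exists_birkhoff_gt n eps : 0 < eps -> exists z, - eps < birkhoff n z.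
Proof.
  intros He. destruct Hattained as [mu [Hmu HmA]].
  pose proof (invariant_prob_birkhoff mu n Hmu HmA) as Hzero.
  apply NNPP; intro Hn.
  assert (Hall : forall z, birkhoff n z <= - eps)
    by (intros z; apply Rnot_lt_le; intro; apply Hn; eauto).
  pose proof Hmu as [Hlin [Hpos [H1 _]]].
  assert (Hc : continuous_on_Sigma lam (fun y => (-1) * birkhoff n y + (- eps) * 1))
    by (apply continuous_lin; [apply continuous_birkhoff|apply continuous_const]).
  specialize (Hpos _ Hc ltac:(intros z; specialize (Hall z); lra)).
  rewrite Hlin, Hzero, H1 in Hpos; [lra|apply continuous_birkhoff|apply continuous_const].
Qed.

Lemma exists_preimage_birkhoff_ge (y : Sigma d) n :
  exists z, shiftn n z = y /\ - 1 - distortion <= birkhoff n z.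
Proof.
  destruct (exists_birkhoff_gt n 1 ltac:(lra)) as [z0 Hz0].
  exists (concat n z0 y). split; [apply shiftn_concat|].
  assert (Hag : agree (n + 0) (concat n z0 y) z0) by (rewrite Nat.add_0_r; apply agree_concat).
  pose proof (birkhoff_distortion 0 n _ _ Hag) as H. simpl in H. rewrite Rmult_1_r in H.
  rewrite Rabs_minus_sym in H. pose proof (Rle_abs (birkhoff n z0 - birkhoff n (concat n z0 y))). lra.
Qed.

(* Sub-action built from the cylinder [c]_M:
   u(y) = inf_K sup { S_n z : n > K + M, z in [c]_M, T^n z = y }.
   The infimum over K is what makes u calibrated rather than only a sub-action. *)
Definition chain_values (c : Sigma d) (M K : nat) (y : Sigma d) (v : R) : Prop :=
  exists n z, (K + M + 1 <= n)%nat /\ agree M z c /\ shiftn n z = y /\ v = birkhoff n z.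

Definition chain_sup c M K y : R := lub_of (chain_values c M K y).

Definition cylinder_subaction c M y : R := - lub_of (fun v => exists K, v = - chain_sup c M K y).

Let chain_floor c M := - INR M * (CA + Rabs (A c - m)) - 1 - distortion.

Lemma chain_values_bounds c M K y :
  (forall v, chain_values c M K y v -> v <= distortion) /\
  (exists v, chain_values c M K y v /\ chain_floor c M <= v).
Proof.
  split.
  - intros v (n & z & Hn & Hag & Hz & ->).
    pose proof (birkhoff_loop_le n 0 z ltac:(lia) (fun k Hk => ltac:(lia))). simpl in H; lra.
  - destruct (exists_preimage_birkhoff_ge y (S K)) as [g [Hg1 Hg2]].
    set (z := concat M c g).
    exists (birkhoff (M + S K) z). split.
    + exists (M + S K)%nat, z. repeat split; [lia|apply agree_concat|].
      rewrite <- shiftn_add. unfold z; rewrite shiftn_concat; auto.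
    + rewrite birkhoff_add. unfold z at 2; rewrite shiftn_concat.
      pose proof (birkhoff_lower_bound c M z). unfold chain_floor. lra.
Qed.

Lemma chain_sup_spec c M K y : is_lub (chain_values c M K y) (chain_sup c M K y).
Proof.
  destruct (chain_values_bounds c M K y) as [H1 [v [Hv _]]]. apply lub_of_spec; eauto.
Qed.

Lemma chain_sup_bounds c M K y : chain_floor c M <= chain_sup c M K y <= distortion.
Proof.
  destruct (chain_values_bounds c M K y) as [H1 [v [Hv Hv2]]].
  destruct (chain_sup_spec c M K y) as [Hs1 Hs2]. split.
  - specialize (Hs1 v Hv). lra.
  - apply Hs2. intros w Hw; auto.
Qed.

Lemma chain_sup_antitone c M K K' y : (K <= K')%nat -> chain_sup c M K' y <= chain_sup c M K y.
Proof.
  intros HK. apply (chain_sup_spec c M K' y). intros v (n & z & Hn & Hz).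
  apply (chain_sup_spec c M K y). exists n, z; split; [lia|auto].
Qed.

Lemma chain_sup_holder c M K L y y' : agree L y y' ->
  chain_sup c M K y <= chain_sup c M K y' + distortion * b ^ L.
Proof.
  intros Hyy. apply (chain_sup_spec c M K y).
  intros v (n & z & Hn & Hag & Hz & ->).
  set (z' := concat n z y').
  assert (Hz' : chain_values c M K y' (birkhoff n z')).
  { exists n, z'; repeat split; auto; [|apply shiftn_concat].
    intros k Hk. unfold z'. rewrite (agree_concat n z y' k) by lia. auto. }
  pose proof (proj1 (chain_sup_spec c M K y') _ Hz').
  assert (Hagz : agree (n + L) z z').
  { rewrite <- (concat_shiftn n z), Hz. apply agree_concat_tail; auto. }
  pose proof (birkhoff_distortion L n z z' Hagz).
  pose proof (Rle_abs (birkhoff n z - birkhoff n z')). lra.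
Qed.

Lemma chain_sup_step c M K y' :
  chain_sup c M K y' + A y' - m <= chain_sup c M (S K) (shift y').
Proof.
  assert (chain_sup c M K y' <= chain_sup c M (S K) (shift y') - A y' + m); [|lra].
  apply (chain_sup_spec c M K y'). intros v (n & z & Hn & Hag & Hz & ->).
  assert (birkhoff (S n) z <= chain_sup c M (S K) (shift y')).
  { apply (chain_sup_spec c M (S K)). exists (S n), z; repeat split; auto; [lia|].
    rewrite <- shift_shiftn, Hz; auto. }
  rewrite birkhoff_S, Hz in H. lra.
Qed.

Lemma chain_sup_step_le c M K y a :
  (forall s : Symb d, chain_sup c M K (scons s y) + A (scons s y) - m <= a) ->
  chain_sup c M (S K) y <= a.
Proof.
  intros Ha. apply (chain_sup_spec c M (S K) y).
  intros v (n & z & Hn & Hag & Hz & ->). destruct n as [|n]; [lia|].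
  set (y' := shiftn n z).
  assert (Hy' : y' = scons (y' O) y).
  { rewrite (scons_shift y') at 1. f_equal. unfold y'. rewrite shift_shiftn; auto. }
  rewrite birkhoff_S. fold y'.
  assert (birkhoff n z <= chain_sup c M K y')
    by (apply (chain_sup_spec c M K y'); exists n, z; repeat split; auto; lia).
  specialize (Ha (y' O)). rewrite <- Hy' in Ha. lra.
Qed.

Lemma cylinder_subaction_spec c M y :
  is_lub (fun v => exists K, v = - chain_sup c M K y) (- cylinder_subaction c M y).
Proof.
  unfold cylinder_subaction. rewrite Ropp_involutive. apply lub_of_spec.
  - exists (- chain_sup c M 0 y); eauto.
  - exists (- chain_floor c M). intros v [K ->].
    pose proof (chain_sup_bounds c M K y). lra.
Qed.

Lemma cylinder_subaction_le c M K y : cylinder_subaction c M y <= chain_sup c M K y.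
Proof.
  pose proof (proj1 (cylinder_subaction_spec c M y) _ (ex_intro _ K eq_refl)). lra.
Qed.

Lemma le_cylinder_subaction c M y a :
  (forall K, a <= chain_sup c M K y) -> a <= cylinder_subaction c M y.
Proof.
  intros Ha. assert (- cylinder_subaction c M y <= - a); [|lra].
  apply (cylinder_subaction_spec c M y). intros v [K ->]. specialize (Ha K); lra.
Qed.

Lemma cylinder_subaction_holder c M : cyl_holder (cylinder_subaction c M) distortion b.
Proof.
  intros L y y' Hyy. apply Rabs_le. split.
  - assert (cylinder_subaction c M y' - distortion * b ^ L <= cylinder_subaction c M y); [|lra].
    apply le_cylinder_subaction. intros K.
    pose proof (cylinder_subaction_le c M K y').
    pose proof (chain_sup_holder c M K L y' y (agree_sym _ _ _ Hyy)). lra.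
  - assert (cylinder_subaction c M y - distortion * b ^ L <= cylinder_subaction c M y'); [|lra].
    apply le_cylinder_subaction. intros K.
    pose proof (cylinder_subaction_le c M K y).
    pose proof (chain_sup_holder c M K L y y' Hyy). lra.
Qed.

Lemma cylinder_subaction_sub c M y' :
  cylinder_subaction c M y' + A y' - m <= cylinder_subaction c M (shift y').
Proof.
  apply le_cylinder_subaction. intros K.
  pose proof (cylinder_subaction_le c M K y').
  pose proof (chain_sup_step c M K y').
  pose proof (chain_sup_antitone c M K (S K) (shift y') ltac:(lia)). lra.
Qed.

(* If every preimage [s y] had a positive gap, the finitely many gaps would eventually all exceed
   [1/(K+1)] while [chain_sup (K+1) y] stays above the infimum. *)
Lemma cylinder_subaction_attained c M y :
  exists y', shift y' = y /\ cylinder_subaction c M y' + A y' - m = cylinder_subaction c M y.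
Proof.
  set (u := cylinder_subaction c M). apply NNPP; intro Hn.
  assert (Hev : forall s : Symb d, exists K0, forall K, (K0 <= K)%nat ->
     chain_sup c M K (scons s y) + A (scons s y) - m <= u y - / INR (S K)).
  { intros s. set (g := u y - (u (scons s y) + A (scons s y) - m)).
    assert (Hg : 0 < g).
    { pose proof (cylinder_subaction_sub c M (scons s y)) as Hs. rewrite shift_scons in Hs.
      destruct Hs as [Hs|Hs]; [unfold g, u; lra|].
      exfalso; apply Hn. exists (scons s y); split; auto. }
    destruct (lub_approx _ _ (g / 2) (cylinder_subaction_spec c M (scons s y)) ltac:(lra))
      as [v [[K1 ->] HK1]].
    destruct (INR_archimed (g / 2) 1 ltac:(lra)) as [K2 HK2].
    exists (Nat.max K1 K2). intros K HK.
    pose proof (chain_sup_antitone c M K1 K (scons s y) ltac:(lia)).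
    assert (HK3 : INR K2 <= INR (S K)) by (apply le_INR; lia).
    assert (/ INR (S K) < g / 2).
    { assert (0 < INR (S K)) by (apply lt_0_INR; lia).
      apply (Rmult_lt_reg_l (INR (S K))); auto. rewrite Rinv_r by lra. nra. }
    unfold g, u in *. lra. }
  destruct (eventually_forall_symb _ Hev) as [K0 HK0].
  pose proof (chain_sup_step_le c M (S K0) y _ (HK0 (S K0) ltac:(lia))).
  pose proof (cylinder_subaction_le c M (S (S K0)) y).
  assert (0 < / INR (S (S K0))) by (apply Rinv_0_lt_compat, lt_0_INR; lia).
  unfold u in *. lra.
Qed.

Lemma cylinder_subaction_calibrated c M : calibrated lam A m (cylinder_subaction c M).
Proof.
  split; [exact (cyl_holder_continuous lam _ _ b Hlam Hb (cylinder_subaction_holder c M))|].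
  intros x. split.
  - intros y Hy. apply seq_eq_eq in Hy. subst x. apply cylinder_subaction_sub.
  - destruct (cylinder_subaction_attained c M x) as [y [Hy1 Hy2]].
    exists y; split; auto. rewrite Hy1; intros k; reflexivity.
Qed.

(* Loops at [x] along which [A - m] has almost nonnegative Birkhoff sum. By [birkhoff_loop_le] such
   sums are also almost nonpositive, so this says that the Mañé potential [S_A(x,x)] vanishes. *)
Definition nonneg_loops (x : Sigma d) : Prop :=
  forall N eta, 0 < eta -> exists k z,
    (1 <= k)%nat /\ shiftn k z = x /\ agree N z x /\ - eta < birkhoff k z.

Lemma aubry_nonneg_loops x : aubry lam A m x -> nonneg_loops x.
Proof.
  intros Haub N eta He.
  destruct (Haub (eta / 2) ltac:(lra)) as [del [Hdel Hd]].
  set (eps := Rmin (del / 2) (lam ^ N)).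
  assert (Heps : 0 < eps < del).
  { pose proof (Rmin_l (del / 2) (lam ^ N)). split; [|unfold eps; lra].
    apply Rmin_pos; [lra|apply pow_lt; lra]. }
  destruct (Hd eps Heps) as [s [Hs1 Hs2]].
  rewrite Rminus_0_r in Hs2. apply Rabs_def2 in Hs2.
  destruct (lub_approx _ s (eta / 2) Hs1 ltac:(lra)) as [v [(k & z & Hk & Hzx & Hdz & ->) Hv]].
  exists k, z. repeat split; auto.
  - apply seq_eq_eq; exact Hzx.
  - apply (agree_of_dist_lt lam Hlam). pose proof (Rmin_r (del / 2) (lam ^ N)). unfold eps in *. lra.
  - unfold birkhoff; lra.
Qed.

Lemma nonneg_loops_aubry x : nonneg_loops x -> aubry lam A m x.
Proof.
  intros Hloops eta He.
  destruct (exists_mul_pow_lt b distortion (eta / 2) Hb ltac:(lra)) as [N0 HN0].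
  exists (lam ^ N0). split; [apply pow_lt; lra|]. intros eps [Heps1 Heps2].
  set (E := mane_set lam A m x x eps).
  assert (Hup : forall v, E v -> v <= distortion * b ^ N0).
  { intros v (k & z & Hk & Hzx & Hdz & ->). apply seq_eq_eq in Hzx.
    apply birkhoff_loop_le; auto. rewrite Hzx. apply (agree_of_dist_lt lam Hlam). lra. }
  destruct (exists_mul_pow_lt lam 1 eps ltac:(lra) Heps1) as [N1 HN1]. rewrite Rmult_1_l in HN1.
  destruct (Hloops N1 (eta / 2) ltac:(lra)) as (k & z & Hk & Hzx & Hag & Hs).
  assert (HE : E (birkhoff k z)).
  { exists k, z. repeat split; auto; [rewrite Hzx; intros j; reflexivity|].
    eapply Rle_lt_trans; [apply (dist_le_of_agree lam Hlam); exact Hag|].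
    assert (lam ^ S N1 <= lam ^ N1) by (apply pow_antitone; [lra|lia]). lra. }
  assert (Hlub : is_lub E (lub_of E)) by (apply lub_of_spec; eauto).
  exists (lub_of E). split; auto.
  destruct Hlub as [H1 H2]. specialize (H1 _ HE).
  assert (lub_of E <= distortion * b ^ N0) by (apply H2; intros v Hv; auto).
  rewrite Rminus_0_r. apply Rabs_def1; lra.
Qed.

Section CalibratedSubAction.
Variable F : Sigma d -> R.
Hypothesis HF : calibrated lam A m F.

Lemma R_F_nonneg y : 0 <= R_F A m F y.
Proof.
  destruct HF as [_ H]. destruct (H (shift y)) as [H1 _].
  specialize (H1 y (fun k => eq_refl)). unfold R_F. lra.
Qed.

Lemma birkhoff_telescope n z :
  birkhoff n z = F (shiftn n z) - F z - bsum (fun i => R_F A m F (shiftn i z)) n.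
Proof.
  induction n; [unfold birkhoff; simpl; rewrite shiftn_0; ring|].
  rewrite birkhoff_S, IHn. simpl bsum. unfold R_F. rewrite shift_shiftn. ring.
Qed.

Lemma I_F_zero_birkhoff x : I_F_zero A m F x -> forall n, birkhoff n x = F (shiftn n x) - F x.
Proof.
  intros HI n. set (r := fun i => R_F A m F (shiftn i x)).
  assert (Hr : forall i, 0 <= r i) by (intros; apply R_F_nonneg).
  assert (Hz : bsum r n = 0).
  { apply Rle_antisym; [|apply bsum_nonneg; auto].
    apply Rnot_lt_le; intro Hp. destruct (HI (bsum r n) Hp) as [N HN].
    specialize (HN (Nat.max n N) ltac:(lia)). unfold R_dist in HN.
    rewrite Rminus_0_r, sum_f_R0_bsum in HN. fold r in HN.
    pose proof (bsum_mono r n (S (Nat.max n N)) Hr ltac:(lia)).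
    rewrite Rabs_right in HN; [lra|]. apply Rle_ge, bsum_nonneg; auto. }
  rewrite birkhoff_telescope. fold r. rewrite Hz. ring.
Qed.

Variable CF : R.
Hypothesis HCF : 0 <= CF.
Hypothesis HFh : cyl_holder F CF b.

Lemma R_F_holder L u v : agree (S L) u v ->
  Rabs (R_F A m F u - R_F A m F v) <= (2 * CF + CA) * b ^ L.
Proof.
  intros Huv. unfold R_F.
  assert (H1 : Rabs (F (shift u) - F (shift v)) <= CF * b ^ L)
    by (apply HFh; intros k Hk; apply Huv; lia).
  assert (H2 : Rabs (F u - F v) <= CF * b ^ S L) by (apply HFh; auto).
  assert (H3 : Rabs (A u - A v) <= CA * b ^ S L) by (apply HA; auto).
  assert (0 <= b ^ L) by (apply pow_le; lra).
  assert (b ^ S L <= b ^ L) by (apply pow_antitone; [lra|lia]).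
  apply Rabs_le_inv in H1, H2, H3. apply Rabs_le. split; nra.
Qed.

Lemma nonneg_loops_I_F_zero x : nonneg_loops x -> I_F_zero A m F x.
Proof.
  intros Hloops. set (r := fun i => R_F A m F (shiftn i x)).
  assert (Hr : forall i, 0 <= r i) by (intros; apply R_F_nonneg).
  set (CR := 2 * CF + CA).
  assert (Key : forall eps, 0 < eps -> forall n, bsum r n <= eps).
  { intros eps He n. pose proof (pos_INR n).
    set (t := eps / (2 * (INR n + 1))).
    assert (Ht : 0 < t) by (apply Rdiv_lt_0_compat; lra).
    destruct (exists_mul_pow_lt b (CF + INR n * CR) t Hb Ht) as [L HL].
    destruct (Hloops (n + S L)%nat t Ht) as (k & z & Hk & Hzx & Hag & Hv).
    set (rz := fun i => R_F A m F (shiftn i z)).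
    assert (0 <= b ^ L) by (apply pow_le; lra).
    assert (Hdelta : bsum rz k <= CF * b ^ L + t).
    { unfold rz. pose proof (birkhoff_telescope k z) as Tz. rewrite Hzx in Tz.
      assert (Hxz : Rabs (F x - F z) <= CF * b ^ (n + S L)) by (apply HFh, agree_sym; auto).
      assert (b ^ (n + S L) <= b ^ L) by (apply pow_antitone; [lra|lia]).
      apply Rabs_le_inv in Hxz. nra. }
    assert (Hcmp : forall j, (j <= n)%nat -> bsum r j <= bsum rz j + INR n * CR * b ^ L).
    { intros j Hj.
      assert (Hdiff : bsum r j - bsum rz j <= bsum (fun _ => CR * b ^ L) j).
      { eapply Rle_trans; [apply Rle_abs|]. eapply Rle_trans; [apply bsum_abs_sub|].
        apply bsum_le. intros i Hi. apply R_F_holder.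
        apply agree_shiftn, agree_sym, agree_le with (n + S L)%nat; [lia|auto]. }
      rewrite bsum_const in Hdiff. assert (INR j <= INR n) by (apply le_INR; auto).
      assert (0 <= CR * b ^ L) by (unfold CR; apply Rmult_le_pos; lra). nra. }
    assert (Hrho : 0 <= INR n * CR * b ^ L) by (unfold CR; apply Rmult_le_pos; [nra|lra]).
    pose proof (bsum_le_of_return r rz k n _ _ Hk (fun i => R_F_nonneg _)
      (fun i => ltac:(unfold rz, r; rewrite <- shiftn_add, Hzx; reflexivity))
      Hdelta Hrho Hcmp n (le_n _)).
    assert (CF * b ^ L + t + INR n * CR * b ^ L < 2 * t)
      by (replace (CF * b ^ L + t + INR n * CR * b ^ L) with ((CF + INR n * CR) * b ^ L + t)
            by ring; lra).
    assert (INR n * (2 * t) <= eps)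
      by (unfold t; apply (Rmult_le_reg_r (2 * (INR n + 1))); [lra|field_simplify; [nra|lra]]).
    nra. }
  intros eps He. exists O. intros k _. unfold R_dist. rewrite Rminus_0_r, sum_f_R0_bsum. fold r.
  rewrite Rabs_right by (apply Rle_ge, bsum_nonneg; auto).
  specialize (Key (eps / 2) ltac:(lra) (S k)). lra.
Qed.

End CalibratedSubAction.

(* If [x] returns infinitely often to the cylinder [c]_M with [c = T^a x], the segments of its
   orbit from [c] back to [c]_M are admissible chains for [u(c)], and along the orbit of [x]
   the Birkhoff sums of [u = cylinder_subaction c M] telescope exactly when [I_u(x) = 0]. *)
Lemma cylinder_subaction_recurrent_ge x a M (c := shiftn a x) :
  I_F_zero A m (cylinder_subaction c M) x ->
  (forall K, exists n, (K <= n)%nat /\ agree M (shiftn n x) c) ->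
  - (2 * distortion * b ^ M) <= cylinder_subaction c M c.
Proof.
  intros HI Hrec. set (G := cylinder_subaction c M).
  pose proof (I_F_zero_birkhoff G (cylinder_subaction_calibrated c M) x HI) as HGe.
  apply le_cylinder_subaction. intros K.
  destruct (Hrec (a + K + M + 1)%nat) as [a' [Ha' Hag']].
  set (n := (a' - a)%nat). set (w := concat n c c).
  assert (Hw : birkhoff n w <= chain_sup c M K c).
  { apply (chain_sup_spec c M K c). exists n, w. repeat split; [unfold n; lia| |apply shiftn_concat].
    apply agree_le with n; [unfold n; lia|apply agree_concat]. }
  assert (Hcn : shiftn n c = shiftn a' x) by (unfold c; rewrite shiftn_add; f_equal; unfold n; lia).
  assert (Hag : agree (n + M) w (concat n c (shiftn n c)))
    by (apply agree_concat_tail; rewrite Hcn; apply agree_sym; auto).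
  rewrite concat_shiftn in Hag.
  pose proof (birkhoff_distortion M n w c Hag) as Hd.
  assert (Hsc : birkhoff n c = G (shiftn a' x) - G c).
  { pose proof (birkhoff_add a n x) as Hadd. rewrite !HGe in Hadd.
    replace (a + n)%nat with a' in Hadd by (unfold n; lia). fold c in Hadd. lra. }
  assert (HGh : Rabs (G (shiftn a' x) - G c) <= distortion * b ^ M)
    by (apply (cylinder_subaction_holder c M); auto).
  apply Rabs_le_inv in HGh. apply Rabs_le_inv in Hd. lra.
Qed.

Lemma cylinder_subactions_nonneg_loops x :
  (forall c M, I_F_zero A m (cylinder_subaction c M) x) -> nonneg_loops x.
Proof.
  intros HI N eta He. pose proof distortion_nonneg.
  destruct (exists_mul_pow_lt b (3 * distortion) (eta / 2) Hb ltac:(lra)) as [M HM].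
  assert (0 <= b ^ M) by (apply pow_le; lra).
  destruct (recurrent_cylinder M (fun n => (N <= n)%nat) (fun n => shiftn n x)) as [a [HaN Hrec]].
  { intros K; exists (K + N)%nat; split; lia. }
  set (c := shiftn a x). set (G := cylinder_subaction c M).
  pose proof (I_F_zero_birkhoff G (cylinder_subaction_calibrated c M) x (HI c M)) as HGe.
  assert (HGc : - (2 * distortion * b ^ M) <= G c).
  { apply cylinder_subaction_recurrent_ge; auto.
    intros K. destruct (Hrec K) as [n [Hn [_ Hag]]]. eauto. }
  destruct (lub_approx _ _ (eta / 4) (chain_sup_spec c M 0 x) ltac:(lra))
    as [v [(n & z & Hn & Hzc & Hzx & ->) Hv]].
  pose proof (cylinder_subaction_le c M 0 x) as HGx. fold G in HGx.
  set (Z := concat a x z).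
  exists (a + n)%nat, Z. repeat split.
  - lia.
  - rewrite <- shiftn_add. unfold Z; rewrite shiftn_concat; auto.
  - apply agree_le with a; auto. apply agree_concat.
  - rewrite birkhoff_add. unfold Z at 2; rewrite shiftn_concat.
    assert (Hag : agree (a + M) Z (concat a x (shiftn a x))) by (apply agree_concat_tail; auto).
    rewrite concat_shiftn in Hag.
    pose proof (birkhoff_distortion M a Z x Hag) as Hd. apply Rabs_le_inv in Hd.
    rewrite HGe in Hd. fold c in Hd. lra.
Qed.

End Maximizing.
End BirkhoffSums.

Theorem mainTheorem14 (d : nat) (lam alpha : R)
  (Hlam : 0 < lam < 1) (Halpha : 0 < alpha)
  (A : Sigma d -> R) (HA : holder lam alpha A)
  (m : R) (Hm : is_mA lam A m) (x : Sigma d) :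
  aubry lam A m x <->
  (forall F : Sigma d -> R, in_SA lam alpha A m F -> I_F_zero A m F x).
Proof.
  set (b := Rpower lam alpha).
  assert (Hb : 0 <= b < 1) by (pose proof (Rpower_lt_1 lam alpha Hlam Halpha); unfold b; lra).
  destruct (holder_cyl_holder lam alpha A Hlam Halpha HA) as [CA [HCA HAc]].
  destruct Hm as [Hattained Hmax].
  split.
  - intros Haub F [HFh HFc].
    destruct (holder_cyl_holder lam alpha F Hlam Halpha HFh) as [CF [HCF HFc']].
    apply (nonneg_loops_I_F_zero lam A m CA b Hlam Hb HCA HAc F HFc CF HCF HFc').
    exact (aubry_nonneg_loops lam A m Hlam x Haub).
  - intros HI.
    apply (nonneg_loops_aubry lam A m CA b Hlam Hb HCA HAc Hmax).
    apply (cylinder_subactions_nonneg_loops lam A m CA b Hlam Hb HCA HAc Hmax Hattained).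
    intros c M. apply HI. split.
    + exact (cyl_holder_holder lam alpha _ _ Hlam Halpha
        (cylinder_subaction_holder lam A m CA b Hlam Hb HCA HAc Hmax Hattained c M)).
    + exact (cylinder_subaction_calibrated lam A m CA b Hlam Hb HCA HAc Hmax Hattained c M).
Qed.
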